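(* Let $u=u_1u_2\cdots u_N$ be a universal cycle for $n$-permutations, possibly containing $\Diamond$ (as defined in the context), and let $n-k$ be its diamondicity. Then (i) $N=k!$. Moreover, letting $c=\gcd(n,N)$: (ii) the occurrences of $\Diamond$ in $u$ are $c$-periodic, i.e., for every $i$, $u_i=\Diamond$ if and only if $u_{i+c}=\Diamond$ (indices modulo $N$); and (iii) $\frac{n}{c}$ divides $n-k$; in particular $c\neq 1$ whenever $1\leq k\leq n-1$.
   Context: An $n$-permutation is a permutation of $\{1,\ldots,n\}$. For a word $w$ of distinct numbers, $\mathrm{red}(w)$ is obtained by replacing the $i$-th smallest letter by $i$. Let $\Diamond$ be a symbol not among the integers. A word $f=f_1\cdots f_n$ over the positive integers together with $\Diamond$, whose integer letters are pairwise distinct, covers an $n$-permutation $\pi$ if one can substitute real numbers for the occurrences of $\Diamond$ (independently) so that the resulting word has $n$ pairwise distinct entries and reduces to $\pi$; equivalently, $f_i<f_j\iff\pi_i<\pi_j$ for all positions $i,j$ holding integers. A universal cycle for $n$-permutations, possibly containing $\Diamond$, is a cyclic word $u_1\cdots u_N$ with $N\geq n$ over this alphabet, indices read modulo $N$, such that each of its $N$ cyclic factors $u_iu_{i+1}\cdots u_{i+n-1}$ ($1\leq i\leq N$) has pairwise distinct integer letters and every $n$-permutation is covered by exactly one of these factors. The number of $\Diamond$'s in a cyclic factor of length $n$ is the same for all such factors; this common number is called the diamondicity of $u$. *)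

From mathcomp Require Import all_boot fingroup perm.
Set Implicit Arguments. Unset Strict Implicit. Unset Printing Implicit Defensive.

(* Letters: [Some m] is the positive integer m, [None] is the symbol Diamond. *)
Definition letter := option nat.
Definition Diamond : letter := None.

(* The cyclic word u = u_0 ... u_{N-1} (0-based), N = size u. *)

Definition cfactor (u : seq letter) (n i : nat) (j : 'I_n) : letter :=
  nth Diamond u ((i + j) %% size u).
Arguments cfactor u n i j : clear implicits.

Definition factor_distinct (u : seq letter) (n i : nat) : Prop :=
  forall (j1 j2 : 'I_n) (a : nat),
    cfactor u n i j1 = Some a -> cfactor u n i j2 = Some a -> j1 = j2.

Definition covers (n : nat) (f : 'I_n -> letter) (pi : 'S_n) : Prop :=
  forall (i j : 'I_n) (a b : nat),
    f i = Some a -> f j = Some b -> (a < b) = (pi i < pi j).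

Definition universal_cycle (n : nat) (u : seq letter) : Prop :=
  [/\ n <= size u,
      (forall x, Some x \in u -> 0 < x),
      (forall i, i < size u -> factor_distinct u n i) &
      (forall pi : 'S_n, exists! i : 'I_(size u), covers (cfactor u n i) pi)].

Definition diamonds_in (u : seq letter) (n i : nat) : nat :=
  #|[pred j : 'I_n | cfactor u n i j == Diamond]|.

From mathcomp Require Import all_boot fingroup perm zify.
Set Implicit Arguments. Unset Strict Implicit. Unset Printing Implicit Defensive.

(* A window whose k integer letters are distinct covers exactly the permutations
   that order those k positions like the letters; every permutation is uniquely
   such a permutation followed by a permutation of the k positions, so each window
   covers n!/k! permutations, and N n!/k! = n! as every permutation is covered
   once.  Because all windows contain n - k diamonds, sliding a window by one
   step shows that the diamond indicator is n-periodic; it is N-periodic by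
   construction, hence c-periodic, and the n - k diamonds of a window are then
   n/c copies of those of a block of length c. *)

Section SortingPermutations.

Variables (n : nat) (h : 'I_n -> nat).

(* Induction on #|S|: send the h-maximal position s of S to the pi-maximal one t
   and sort S :\ s recursively. *)
Lemma Sym_sorting (S : {set 'I_n}) (pi : 'S_n) : {in S &, injective h} ->
  exists2 rho : 'S_n, rho \in Sym S &
    {in S &, forall x y, (h x < h y) = (pi (rho x) < pi (rho y))}.
Proof.
have [m leSm] := ubnP #|S|; elim: m => // m IH in S pi leSm *; move=> hinj.
have [->|[x0 x0S]] := set_0Vmem S.
  by exists 1%g => [|x y]; rewrite inE ?perm_on1.
pose s := [arg max_(x > x0 in S) h x]; pose t := [arg max_(x > x0 in S) pi x].
have [sS smax] : s \in S /\ forall y, y \in S -> h y <= h s.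
  by rewrite /s; case: arg_maxnP.
have [tS tmax] : t \in S /\ forall y, y \in S -> pi y <= pi t.
  by rewrite /t; case: arg_maxnP.
have stS : perm_on S (tperm s t).
  apply: subset_trans (tperm_on s t) _.
  by apply/subsetP => z; rewrite !inE => /orP[]/eqP->.
have [||rho' rho'S ord'] := IH (S :\ s) (tperm s t * pi)%g.
  by rewrite (cardsD1 s S) sS add1n ltnS in leSm.
  by move=> x y /setD1P[_ xS] /setD1P[_ yS]; apply: hinj.
rewrite inE in rho'S.
have rho's : rho' s = s by apply: (out_perm rho'S); rewrite !inE eqxx.
have lt_pit y : y \in S :\ s -> pi (tperm s t (rho' y)) < pi t.
  rewrite -(perm_closed y rho'S) => /setD1P[ys yS].
  rewrite ltn_neqAle tmax ?(perm_closed _ stS) // andbT.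
  apply: contra ys => /eqP/val_inj/perm_inj/eqP.
  by rewrite -{2}(tpermL s t) (inj_eq perm_inj).
have rho'S_S : perm_on S rho'.
  by apply: subset_trans rho'S _; apply/subsetP => z /setD1P[].
exists (rho' * tperm s t)%g; first by rewrite groupM ?inE ?rho'S_S ?stS.
move=> x y xS yS; rewrite !permM.
have [->|xs] := eqVneq x s; have [->|ys] := eqVneq y s.
- by rewrite !ltnn.
- have yS' : y \in S :\ s by rewrite !inE ys.
  by rewrite rho's tpermL !ltnNge smax // ltnW ?lt_pit.
- rewrite rho's tpermL lt_pit ?inE ?xs // ltn_neqAle smax // andbT.
  by apply: contraNneq xs => /(hinj _ _ xS sS) ->.
- by rewrite ord' ?inE ?xs ?ys // !permM.
Qed.

Lemma Sym_order_preserving_id (S : {set 'I_n}) (rho : 'S_n) :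
  {in S &, injective h} -> rho \in Sym S ->
  {in S &, forall x y, (h x < h y) = (h (rho x) < h (rho y))} -> rho = 1%g.
Proof.
move=> hinj; rewrite inE => rhoS ord.
pose rank x := #|[set y in S | h y < h x]|.
have rank_mono x y : x \in S -> h x < h y -> rank x < rank y.
  move=> xS lt_xy; apply/proper_card/properP; split.
    by apply/subsetP => z; rewrite !inE => /andP[-> /ltn_trans]; apply.
  by exists x; rewrite !inE ?xS ?lt_xy ?ltnn.
have rank_rho x : x \in S -> rank (rho x) = rank x.
  move=> xS; rewrite /rank -(card_preimset _ (@perm_inj _ rho)).
  apply: eq_card => y; rewrite !inE (perm_closed y rhoS).
  by case yS: (y \in S); rewrite //= -ord.
apply/permP => x; rewrite perm1.
have [xS|/(out_perm rhoS)//] := boolP (x \in S).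
have rxS : rho x \in S by rewrite (perm_closed x rhoS).
have := rank_rho x xS.
case: (ltngtP (h x) (h (rho x))) => [lt|gt|eq].
- by move/rank_mono: lt => /(_ xS) + E; rewrite E ltnn.
- by move/rank_mono: gt => /(_ rxS) + E; rewrite E ltnn.
- by move=> _; apply: hinj.
Qed.

End SortingPermutations.

Definition coversb n (f : 'I_n -> letter) (pi : 'S_n) : bool :=
  [forall i, forall j,
     if (f i, f j) is (Some a, Some b) then (a < b) == (pi i < pi j) else true].

Lemma coversP n (f : 'I_n -> letter) (pi : 'S_n) : reflect (covers f pi) (coversb f pi).
Proof.
apply: (iffP forallP) => [cov i j a b fi fj | cov i].
  by have /forallP/(_ j) := cov i; rewrite fi fj => /eqP.
apply/forallP => j; case fi: (f i) => [a|] //; case fj: (f j) => [b|] //.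
by rewrite (cov _ _ _ _ fi fj).
Qed.

Definition covered n (f : 'I_n -> letter) : {set 'S_n} := [set pi | coversb f pi].

Section CoveredPermutations.

Variables (n : nat) (f : 'I_n -> letter).
Hypothesis f_distinct : forall j1 j2 a, f j1 = Some a -> f j2 = Some a -> j1 = j2.

Let S := [set j | f j != Diamond].
Let h j := odflt 0 (f j).

Let fS j : j \in S -> f j = Some (h j).
Proof. by rewrite inE /h; case: (f j). Qed.

Let h_inj : {in S &, injective h}.
Proof. by move=> x y xS yS hxy; apply: (f_distinct (fS xS)); rewrite hxy fS. Qed.

Let coversE (pi : 'S_n) :
  (pi \in covered f) = [forall x in S, forall y in S, (h x < h y) == (pi x < pi y)].
Proof.
rewrite inE; apply/coversP/forall_inP => [cov x xS | cov x y a b fx fy].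
  by apply/forall_inP => y yS; rewrite (cov _ _ _ _ (fS xS) (fS yS)).
have [xS yS] : x \in S /\ y \in S by rewrite !inE fx fy.
by move: (fS xS) (fS yS) (forall_inP (cov x xS) y yS); rewrite fx fy => -[->] [->] /eqP.
Qed.

(* Every permutation factors uniquely as a covered one followed by a permutation of
   the positions holding integers. *)
Lemma card_covered : #|covered f| * #|S|`! = n`!.
Proof.
rewrite -card_Sym -cardsX -card_Sn.
rewrite -(card_in_imset (f := fun p : 'S_n * 'S_n => (p.2 * p.1)%g)).
  apply: eq_card => s; rewrite [RHS]inE; apply/imsetP.
  have [rho rhoS ord] := Sym_sorting s h_inj.
  exists (rho * s, rho^-1)%g; last by rewrite /= mulgA mulVg mul1g.
  rewrite in_setX /= groupV rhoS andbT coversE.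
  by apply/forall_inP => x xS; apply/forall_inP => y yS; rewrite !permM ord.
move=> [p1 r1] [p2 r2]; rewrite !in_setX !coversE /= => /andP[cov1 r1S] /andP[cov2 r2S] E.
set rho := (r2^-1 * r1)%g.
have p2E : p2 = (rho * p1)%g by rewrite /rho -mulgA E mulgA mulVg mul1g.
have rho1 : rho = 1%g.
  apply: (Sym_order_preserving_id (h := fun x => val (p1 x)) (S := S)).
  - by move=> x y _ _ /val_inj/perm_inj.
  - by rewrite /rho groupM ?groupV.
  move=> x y xS yS; have /forall_inP/(_ y yS)/eqP <- := forall_inP cov1 x xS.
  by have /forall_inP/(_ y yS)/eqP -> := forall_inP cov2 x xS; rewrite p2E !permM.
have r12 : r1 = r2 by rewrite -(mulKVg r2 r1) -/rho rho1 mulg1.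
by rewrite p2E rho1 mul1g r12.
Qed.

End CoveredPermutations.

Definition periodic T (D : nat -> T) (p : nat) := forall i, D (i + p) = D i.

Section Periodicity.

Variable T : Type.
Implicit Types D : nat -> T.

Lemma periodic_mull D p a : periodic D p -> periodic D (a * p).
Proof. by move=> Dp; elim: a => [|a IH] i; rewrite ?addn0 // mulSn addnA IH Dp. Qed.

Lemma periodic_gcdn D p q : 0 < q -> periodic D p -> periodic D q -> periodic D (gcdn p q).
Proof.
move=> q_gt0 Dp Dq i; have [a _ /dvdnP[b Eb]] := Bezoutl p q_gt0.
by rewrite -(periodic_mull a Dp) -addnA gcdnC Eb periodic_mull.
Qed.

End Periodicity.

Lemma periodic_window_sum n (D : nat -> bool) :
  (forall i, \sum_(j < n) D (i + j) = \sum_(j < n) D (i.+1 + j)) -> periodic D n.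
Proof.
case: n => [|m] window i; first by rewrite addn0.
move: (window i); rewrite big_ord_recl big_ord_recr addn0 addnC /=.
under [in RHS]eq_bigr do rewrite addSnnS.
by move/addnI; rewrite addSnnS; case: (D _); case: (D _).
Qed.

Lemma sum_periodic (F : nat -> nat) c n :
  periodic F c -> c %| n -> \sum_(j < n) F j = n %/ c * \sum_(j < c) F j.
Proof.
move=> Fc /dvdnP[m ->]; have [->|c_gt0] := posnP c.
  by rewrite muln0 !big_ord0 muln0.
rewrite mulnK //; elim: m => [|m IH]; first by rewrite big_ord0.
rewrite mulSn big_split_ord mulSn -IH; congr (_ + _).
by apply: eq_bigr => j _; rewrite /= addnC Fc.
Qed.

Definition is_diamond (u : seq letter) (i : nat) : bool :=
  nth Diamond u (i %% size u) == Diamond.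

Lemma is_diamond_periodic u : periodic (is_diamond u) (size u).
Proof. by move=> i; rewrite /is_diamond modnDr. Qed.

Lemma diamonds_in_sum u n i : diamonds_in u n i = \sum_(j < n) is_diamond u (i + j).
Proof. by rewrite /diamonds_in -sum1_card big_mkcond. Qed.

Lemma diamonds_in_mod u n i : diamonds_in u n (i %% size u) = diamonds_in u n i.
Proof. by apply: eq_card => j; rewrite !inE /cfactor modnDml. Qed.

Lemma card_integer_letters u n i :
  #|[set j | cfactor u n i j != Diamond]| = n - diamonds_in u n i.
Proof.
rewrite /diamonds_in -[n in n - _]card_ord -(cardC [pred j | cfactor u n i j == Diamond]).
by rewrite addKn; apply: eq_card => j; rewrite !inE.
Qed.

Section UniversalCycle.

Variables (n : nat) (u : seq letter).
Hypothesis u_univ : universal_cycle n u.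

Lemma sum_card_covered : \sum_(i < size u) #|covered (cfactor u n i)| = n`!.
Proof.
case: u_univ => _ _ _ cov.
under eq_bigr do rewrite -sum1_card big_mkcond.
rewrite -card_Sn -sum1_card.
rewrite exchange_big; apply: eq_bigr => pi _.
have [i0 [cov0 uniq0]] := cov pi.
rewrite (bigD1 i0) //= big1 => [|i ne_i_i0]; first by rewrite inE (introT (coversP _ _) cov0).
by rewrite inE; case: coversP => // /uniq0 eq_i; rewrite eq_i eqxx in ne_i_i0.
Qed.

Lemma size_universal_cycle k : 0 < size u ->
  (forall i, i < size u -> #|[set j | cfactor u n i j != Diamond]| = k) ->
  size u = k`!.
Proof.
case: u_univ => _ _ dist _ u_gt0 card_ints.
have card_cov (i : 'I_(size u)) : #|covered (cfactor u n i)| * k`! = n`!.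
  by rewrite -(card_ints i) //; apply: card_covered; apply: dist.
pose q := #|covered (cfactor u n (Ordinal u_gt0))|.
have q_gt0 : 0 < q.
  by have := fact_gt0 n; rewrite -(card_cov (Ordinal u_gt0)) muln_gt0 => /andP[].
have card_cov_q (i : 'I_(size u)) : #|covered (cfactor u n i)| = q.
  by apply/eqP; rewrite -(eqn_pmul2r (fact_gt0 k)) !card_cov.
apply/eqP; rewrite -(eqn_pmul2r q_gt0) [k`! * q]mulnC card_cov.
by rewrite -sum_card_covered (eq_bigr _ (fun i _ => card_cov_q i)) sum_nat_const card_ord.
Qed.

End UniversalCycle.

Theorem corollary1 (n k : nat) (u : seq letter) :
  universal_cycle n u ->
  0 < size u ->
  k <= n ->
  (forall i, i < size u -> diamonds_in u n i = n - k) ->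
  let N := size u in
  let c := gcdn n N in
  [/\ N = k`!,
      (forall i, (nth Diamond u (i %% N) == Diamond)
                 = (nth Diamond u ((i + c) %% N) == Diamond)),
      (n %/ c) %| (n - k) &
      (1 <= k <= n - 1 -> c != 1)].
Proof.
move=> u_univ u_gt0 le_k_n const_diamonds N c.
have diamonds_n i : diamonds_in u n i = n - k.
  by rewrite -diamonds_in_mod const_diamonds ?ltn_pmod.
have Dn : periodic (is_diamond u) n.
  by apply: periodic_window_sum => i; rewrite -!diamonds_in_sum !diamonds_n.
have Dc : periodic (is_diamond u) c := periodic_gcdn u_gt0 Dn (is_diamond_periodic u).
have c_dvd : n %/ c %| n - k.
  rewrite -(diamonds_n 0) diamonds_in_sum.
  rewrite (sum_periodic (F := fun j => is_diamond u (0 + j)) (c := c)) ?dvdn_mulr ?dvdn_gcdl //.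
  by move=> j; rewrite /= addnA Dc.
split=> //.
- apply: (size_universal_cycle u_univ) => // i _.
  by rewrite card_integer_letters diamonds_n subKn.
- by move=> i; rewrite -[LHS]/(is_diamond u i) -Dc.
- move=> /andP[k_gt0 k_lt_n]; apply: contraTneq c_dvd => ->.
  by rewrite divn1 gtnNdvd; lia.
Qed.
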